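(* Let $v\ge 4$ and $\theta\in[0,1]$, and consider the tipsy cop and drunken robber game on the cycle graph $C_v$. For $1\le i\le\lfloor v/2\rfloor$ and $m\ge 1$ the following hold. If $v$ is even: \[ R_m^i=\begin{cases}\tfrac12 C^{2}_{m-1}, & i=1,\\ \tfrac12 C^{i-1}_{m-1}+\tfrac12 C^{i+1}_{m-1}, & 1<i<v/2,\\ C^{v/2-1}_{m-1}, & i=v/2,\end{cases} \qquad C_m^i=\begin{cases}\tfrac{\theta}{2}R^{2}_{m-1}, & i=1,\\ \left(1-\tfrac{\theta}{2}\right)R^{i-1}_{m-1}+\tfrac{\theta}{2}R^{i+1}_{m-1}, & 1<i<v/2,\\ R^{v/2-1}_{m-1}, & i=v/2.\end{cases} \] If $v$ is odd: \[ R_m^i=\begin{cases}\tfrac12 C^{2}_{m-1}, & i=1,\\ \tfrac12 C^{i-1}_{m-1}+\tfrac12 C^{i+1}_{m-1}, & 1<i<\frac{v-1}{2},\\ \tfrac12 C^{(v-3)/2}_{m-1}+\tfrac12 C^{(v-1)/2}_{m-1}, & i=\frac{v-1}{2},\end{cases} \qquad C_m^i=\begin{cases}\tfrac{\theta}{2}R^{2}_{m-1}, & i=1,\\ \left(1-\tfrac{\theta}{2}\right)R^{i-1}_{m-1}+\tfrac{\theta}{2}R^{i+1}_{m-1}, & 1<i<\frac{v-1}{2},\\ \left(1-\tfrac{\theta}{2}\right)R^{(v-3)/2}_{m-1}+\tfrac{\theta}{2}R^{(v-1)/2}_{m-1}, & i=\frac{v-1}{2}.\end{cases} \]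
   Context: Tipsy cop and drunken robber game on a graph: a cop and a robber occupy distinct vertices and alternate moves; on each move the mover must move to an adjacent vertex (no staying put). The robber always moves to a uniformly random neighbor. The cop, independently at each of her moves, with probability $\theta$ moves to a uniformly random neighbor and with probability $1-\theta$ moves to a neighbor that decreases her distance to the robber (onto the robber if adjacent). All random choices are independent; the robber is captured (game over) as soon as both occupy the same vertex. On the cycle $C_v$, for $1\le i\le \lfloor v/2\rfloor$, $R^i_m$ denotes the probability that, starting with cop and robber at distance $i$ and the robber to move first (then alternating), no capture occurs during the first $m$ moves; $C^i_m$ is the same probability when the cop moves first. By convention $R^i_0=C^i_0=1$. *)

From mathcomp Require Import all_boot all_order all_algebra.
Set Implicit Arguments. Unset Strict Implicit. Unset Printing Implicit Defensive.
Import Order.TTheory GRing.Theory Num.Theory.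
Local Open Scope ring_scope.

(* The cycle C_v: vertices are the naturals 0, ..., v-1; x is adjacent to
   (x+1) mod v and (x+v-1) mod v. *)
Definition cnext (v x : nat) : nat := ((x + 1) %% v)%N.
Definition cprev (v x : nat) : nat := ((x + v - 1) %% v)%N.

Definition cdist (v x y : nat) : nat :=
  minn ((x + v - y) %% v) ((y + v - x) %% v).

Definition greedy_move (v : nat) (g : nat -> nat -> nat) : Prop :=
  forall c r, (c < v)%N -> (r < v)%N -> c <> r ->
    (g c r = cnext v c \/ g c r = cprev v c) /\ (cdist v (g c r) r < cdist v c r)%N.

(* surv v th g m rt c r : probability that no capture occurs during the next
   m moves, starting with cop at c, robber at r (c <> r), robber to move if
   rt = true, cop to move if rt = false, moves alternating. *)
Fixpoint surv {R : realFieldType} (v : nat) (th : R) (g : nat -> nat -> nat)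
    (m : nat) (rt : bool) (c r : nat) : R :=
  match m with
  | 0 => 1
  | m'.+1 =>
    let alive x y := if x == y then 0 else surv v th g m' (~~ rt) x y in
    if rt then
      (alive c (cnext v r) + alive c (cprev v r)) / 2
    else
      th * ((alive (cnext v c) r + alive (cprev v c) r) / 2)
      + (1 - th) * alive (g c r) r
  end.

(* R^i_m and C^i_m: cop at vertex 0, robber at vertex i (distance i). *)
Definition Rprob {R : realFieldType} (v : nat) (th : R) g (i m : nat) : R :=
  surv v th g m true 0%N i.
Definition Cprob {R : realFieldType} (v : nat) (th : R) g (i m : nat) : R :=
  surv v th g m false 0%N i.

From mathcomp Require Import all_boot all_order all_algebra.
From mathcomp Require Import zify ring.
Import Order.TTheory GRing.Theory Num.Theory.

(** By the rotations and reflections of C_v, whether the robber survives the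
    next m moves depends only on the distance d between the players.  Moving
    either player changes d into d - 1 through one neighbour and into
    min(d + 1, v - d - 1) through the other, and the greedy cop always achieves
    d - 1.  Hence the distance is itself a Markov chain, which steps closer
    with probability 1/2 on a robber move and 1 - θ/2 on a cop move; the
    recurrences are its one-step expansion at d = 1, at interior distances,
    and at the largest one or two distances. *)

Lemma modn_two_cases a v : (a < v + v)%N ->
  (a < v /\ a %% v = a)%N \/ (v <= a /\ a %% v = a - v)%N.
Proof.
case: (ltnP a v) => [a_lt|v_le a_lt]; [left; split=> //; exact: modn_small|right].
by split=> //; rewrite -{1}(subnK v_le) modnDr modn_small //; lia.
Qed.

(* Every residue below is taken of a number smaller than 2v; rewriting the
   innermost ones first turns the goal into linear arithmetic. *)
Ltac split_modn v :=
  repeat match goal with |- context [(?a %% v)%N] =>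
    lazymatch a with context [modn] => fail | _ =>
      have [[? ->]|[? ->]] := @modn_two_cases a v ltac:(lia)
    end end.

Definition coffset v x y := ((y + v - x) %% v)%N.
Definition cnorm v k := minn k (v - k).
Definition away v d := minn d.+1 (v - d.+1).

Section CycleGeometry.
Context {v : nat}.

Lemma cnext_lt x : (x < v)%N -> (cnext v x < v)%N.
Proof. by move=> x_lt; rewrite ltn_pmod //; apply: leq_ltn_trans x_lt. Qed.

Lemma cprev_lt x : (x < v)%N -> (cprev v x < v)%N.
Proof. by move=> x_lt; rewrite ltn_pmod //; apply: leq_ltn_trans x_lt. Qed.

Lemma coffset_lt x y : (x < v)%N -> (coffset v x y < v)%N.
Proof. by move=> x_lt; rewrite ltn_pmod //; apply: leq_ltn_trans x_lt. Qed.

Lemma coffset_eq0 x y : (x < v)%N -> (y < v)%N -> (coffset v x y == 0)%N = (x == y).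
Proof. by move=> *; rewrite /coffset; split_modn v; apply/eqP/eqP; lia. Qed.

Lemma coffset_cnext x y : (x < v)%N -> (y < v)%N ->
  coffset v x (cnext v y) = cnext v (coffset v x y).
Proof. by move=> *; rewrite /cnext /coffset; split_modn v; lia. Qed.

Lemma coffset_cprev x y : (x < v)%N -> (y < v)%N ->
  coffset v x (cprev v y) = cprev v (coffset v x y).
Proof. by move=> *; rewrite /cprev /coffset; split_modn v; lia. Qed.

Lemma cnorm_neighbours k : (0 < k < v)%N ->
  (cnorm v (cnext v k) = away v (cnorm v k) /\ cnorm v (cprev v k) = (cnorm v k).-1) \/
  (cnorm v (cnext v k) = (cnorm v k).-1 /\ cnorm v (cprev v k) = away v (cnorm v k)).
Proof.
move=> ?; rewrite /cnorm /away /cnext /cprev.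
by case: (leqP k.*2 v) => ?; [left|right]; split_modn v; split; lia.
Qed.

Lemma cdistC x y : cdist v x y = cdist v y x.
Proof. by rewrite /cdist minnC. Qed.

Lemma cdist_offset x y : (x < v)%N -> (y < v)%N -> cdist v x y = cnorm v (coffset v x y).
Proof. by move=> *; rewrite /cdist /cnorm /coffset; split_modn v; lia. Qed.

Lemma cdist_eq0 x y : (x < v)%N -> (y < v)%N -> (cdist v x y == 0)%N = (x == y).
Proof. by move=> *; rewrite /cdist; split_modn v; apply/eqP/eqP; lia. Qed.

Lemma cdist_le_half {x y} : (x < v)%N -> (y < v)%N -> (cdist v x y <= v./2)%N.
Proof. by move=> *; rewrite /cdist; split_modn v; lia. Qed.

Lemma cdist0n d : (0 < d <= v./2)%N -> cdist v 0 d = d.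
Proof. by move=> *; rewrite /cdist; split_modn v; lia. Qed.

Lemma cdist_neighbours {x y} : (x < v)%N -> (y < v)%N -> x != y ->
  (cdist v x (cnext v y) = away v (cdist v x y) /\
   cdist v x (cprev v y) = (cdist v x y).-1) \/
  (cdist v x (cnext v y) = (cdist v x y).-1 /\
   cdist v x (cprev v y) = away v (cdist v x y)).
Proof.
move=> x_lt y_lt xy; rewrite !cdist_offset ?cnext_lt ?cprev_lt //.
rewrite coffset_cnext // coffset_cprev //; apply: cnorm_neighbours.
by rewrite lt0n coffset_eq0 // xy coffset_lt.
Qed.

Section GreedyMove.
Variable g : nat -> nat -> nat.
Hypothesis g_greedy : greedy_move v g.

Lemma greedy_move_lt c r : (c < v)%N -> (r < v)%N -> c != r -> (g c r < v)%N.
Proof.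
move=> c_lt r_lt /eqP cr.
by have [[->|->] _] := g_greedy c r c_lt r_lt cr; [exact: cnext_lt|exact: cprev_lt].
Qed.

(* The other neighbour is at distance [away d >= d - 1] since [d <= v/2], so
   a strict decrease can only mean [d - 1]. *)
Lemma greedy_move_cdist c r : (c < v)%N -> (r < v)%N -> c != r ->
  cdist v (g c r) r = (cdist v c r).-1.
Proof.
move=> c_lt r_lt cr; have [g_nb] := g_greedy c r c_lt r_lt (elimN eqP cr).
have := cdist_le_half r_lt c_lt.
rewrite [cdist v (g c r) r]cdistC [cdist v c r]cdistC.
have rc : r != c by rewrite eq_sym.
by case: g_nb => ->; case: (cdist_neighbours r_lt c_lt rc) => -[nb1 nb2];
  rewrite ?nb1 ?nb2 /away; lia.
Qed.

End GreedyMove.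
End CycleGeometry.

Local Open Scope ring_scope.

Section DistanceChain.
Context {R : realFieldType} (v : nat) (th : R).

Definition closer_prob (rt : bool) : R := if rt then 1/2 else 1 - th/2.
Definition away_prob (rt : bool) : R := if rt then 1/2 else th/2.

Lemma closer_away_prob rt : closer_prob rt + away_prob rt = 1.
Proof. by case: rt => /=; [field|ring]. Qed.

Fixpoint dsurv (m : nat) (rt : bool) (d : nat) : R :=
  if m is m'.+1 then
    let alive d := if d == 0%N then 0 else dsurv m' (~~ rt) d in
    closer_prob rt * alive d.-1 + away_prob rt * alive (away v d)
  else 1.

Definition dalive m rt d := if d == 0%N then 0 else dsurv m rt d.

Lemma dalive0 m rt : dalive m rt 0 = 0.
Proof. by []. Qed.

Lemma dsurvS m rt d : dsurv m.+1 rt d =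
  closer_prob rt * dalive m (~~ rt) d.-1 + away_prob rt * dalive m (~~ rt) (away v d).
Proof. by []. Qed.

End DistanceChain.

Section Reduction.
Context {R : realFieldType} (v : nat) (th : R) (g : nat -> nat -> nat).
Hypothesis g_greedy : greedy_move v g.

Definition alive m rt c r := if c == r then 0 else surv v th g m rt c r.

Lemma survS m rt c r : surv v th g m.+1 rt c r =
  if rt then (alive m false c (cnext v r) + alive m false c (cprev v r)) / 2
  else th * ((alive m true (cnext v c) r + alive m true (cprev v c) r) / 2)
       + (1 - th) * alive m true (g c r) r.
Proof. by case: rt. Qed.

Lemma alive_cdist m rt c r : (c < v)%N -> (r < v)%N ->
  alive m rt c r = dalive v th m rt (cdist v c r).
Proof.
elim: m rt c r => [|m IH] rt c r c_lt r_lt; rewrite /alive /dalive cdist_eq0 //.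
case: eqP => // /eqP cr; rewrite survS dsurvS.
have rc : r != c by rewrite eq_sym.
case: rt.
  rewrite !IH ?cnext_lt ?cprev_lt //.
  by case: (cdist_neighbours c_lt r_lt cr) => -[-> ->] /=; ring.
rewrite !IH ?cnext_lt ?cprev_lt ?greedy_move_lt // greedy_move_cdist //.
rewrite ![cdist v _ r]cdistC.
by case: (cdist_neighbours r_lt c_lt rc) => -[-> ->] /=; field.
Qed.

Lemma surv0_dsurv m rt i : (0 < i <= v./2)%N -> surv v th g m rt 0 i = dsurv v th m rt i.
Proof.
move=> /andP[i_gt0 i_le]; have := alive_cdist m rt 0 i.
rewrite /alive /dalive cdist0n ?i_gt0 // eq_sym (negbTE (lt0n_neq0 i_gt0)); apply; lia.
Qed.

Lemma dalive_surv0 m rt j : (0 < j <= v./2)%N -> dalive v th m rt j = surv v th g m rt 0 j.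
Proof.
move=> /andP[j_gt0 j_le].
by rewrite surv0_dsurv ?j_gt0 // /dalive (negbTE (lt0n_neq0 j_gt0)).
Qed.

Lemma surv0_succ m rt i : (0 < i <= v./2)%N -> surv v th g m.+1 rt 0 i =
  closer_prob th rt * dalive v th m (~~ rt) i.-1
  + away_prob th rt * dalive v th m (~~ rt) (away v i).
Proof. by move=> i_range; rewrite surv0_dsurv // dsurvS. Qed.

Hypothesis v_ge4 : (4 <= v)%N.

Lemma surv0_succ_one m rt :
  surv v th g m.+1 rt 0 1 = away_prob th rt * surv v th g m (~~ rt) 0 2.
Proof.
rewrite surv0_succ; last lia.
rewrite (_ : away v 1 = 2%N); last by rewrite /away; lia.
by rewrite dalive0 mulr0 add0r dalive_surv0 //; lia.
Qed.

Lemma surv0_succ_interior m rt i : (1 < i < v./2)%N ->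
  surv v th g m.+1 rt 0 i = closer_prob th rt * surv v th g m (~~ rt) 0 i.-1
                            + away_prob th rt * surv v th g m (~~ rt) 0 i.+1.
Proof.
move=> i_range; rewrite surv0_succ; last lia.
by rewrite (_ : away v i = i.+1) ?dalive_surv0 //; rewrite /away; lia.
Qed.

Lemma surv0_succ_half_even m rt : ~~ odd v ->
  surv v th g m.+1 rt 0 v./2 = surv v th g m (~~ rt) 0 (v./2).-1.
Proof.
move=> v_even; rewrite surv0_succ; last lia.
rewrite (_ : away v v./2 = (v./2).-1) ?dalive_surv0; try by rewrite /away; lia.
by rewrite -mulrDl closer_away_prob mul1r.
Qed.

Lemma surv0_succ_half_odd m rt : odd v ->
  surv v th g m.+1 rt 0 ((v - 1)./2) =
    closer_prob th rt * surv v th g m (~~ rt) 0 ((v - 3)./2)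
    + away_prob th rt * surv v th g m (~~ rt) 0 ((v - 1)./2).
Proof.
move=> v_odd; rewrite surv0_succ; last lia.
rewrite (_ : ((v - 1)./2).-1 = (v - 3)./2)%N; last lia.
by rewrite (_ : away v _ = (v - 1)./2) ?dalive_surv0 //; rewrite /away; lia.
Qed.

End Reduction.

Theorem mainTheorem6 (R : realFieldType) (v : nat) (th : R)
  (g : nat -> nat -> nat) (i m : nat) :
  (4 <= v)%N -> 0 <= th <= 1 -> greedy_move v g ->
  (1 <= i)%N -> (i <= v./2)%N -> (1 <= m)%N ->
  let Rp := Rprob v th g in
  let Cp := Cprob v th g in
  (~~ odd v ->
     (i = 1%N -> Rp i m = 1/2 * Cp 2%N m.-1) /\
     ((1 < i < v./2)%N -> Rp i m = 1/2 * Cp i.-1 m.-1 + 1/2 * Cp i.+1 m.-1) /\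
     (i = v./2 -> Rp i m = Cp (v./2).-1 m.-1) /\
     (i = 1%N -> Cp i m = th/2 * Rp 2%N m.-1) /\
     ((1 < i < v./2)%N ->
        Cp i m = (1 - th/2) * Rp i.-1 m.-1 + th/2 * Rp i.+1 m.-1) /\
     (i = v./2 -> Cp i m = Rp (v./2).-1 m.-1)) /\
  (odd v ->
     (i = 1%N -> Rp i m = 1/2 * Cp 2%N m.-1) /\
     ((1 < i < (v - 1)./2)%N ->
        Rp i m = 1/2 * Cp i.-1 m.-1 + 1/2 * Cp i.+1 m.-1) /\
     (i = (v - 1)./2 ->
        Rp i m = 1/2 * Cp ((v - 3)./2) m.-1 + 1/2 * Cp ((v - 1)./2) m.-1) /\
     (i = 1%N -> Cp i m = th/2 * Rp 2%N m.-1) /\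
     ((1 < i < (v - 1)./2)%N ->
        Cp i m = (1 - th/2) * Rp i.-1 m.-1 + th/2 * Rp i.+1 m.-1) /\
     (i = (v - 1)./2 ->
        Cp i m = (1 - th/2) * Rp ((v - 3)./2) m.-1 + th/2 * Rp ((v - 1)./2) m.-1)).
Proof.
move=> v_ge4 _ g_greedy _ _ m_ge1 Rp Cp; rewrite {}/Rp {}/Cp /Rprob /Cprob.
case: m m_ge1 => // m _.
split=> v_parity; do ![split] => [->|i_mid|->|->|i_mid|->].
- exact: surv0_succ_one.
- exact: surv0_succ_interior.
- exact: surv0_succ_half_even.
- exact: surv0_succ_one.
- exact: surv0_succ_interior.
- exact: surv0_succ_half_even.
- exact: surv0_succ_one.
- by apply: surv0_succ_interior => //; lia.
- exact: surv0_succ_half_odd.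
- exact: surv0_succ_one.
- by apply: surv0_succ_interior => //; lia.
- exact: surv0_succ_half_odd.
Qed.
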